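(* Let $\mathcal{U}\subset\mathbb{R}^n\times\mathbb{R}^p$ be open, $\mathcal{D}\subset\mathcal{U}$ nonempty, $\Gamma:\mathcal{D}\times\mathbb{R}^m\rightrightarrows\mathbb{R}^q$ with $\Gamma(\xi,\cdot)$ positively homogeneous for all $\xi\in\mathcal{D}$, and $\mathcal{A}:\mathcal{U}\to\mathbb{R}^{q\times m}$. Suppose that $\Gamma$ is polyhedral. Then $\Gamma$ is outer semicontinuous, and for every $\bar\xi\in\mathcal{D}$, with $H:=\Gamma(\bar\xi,\cdot)$, $\mathcal{Z}:=\mathrm{bd}\,\mathbb{B}\cap\mathrm{dom}\,H$ and $\mathcal{Z}_0:=\{z\in\mathcal{Z}\mid 0\in\mathcal{A}(\bar\xi)z+H(z)\}$, the following hold: the set $\mathcal{A}(\bar\xi)\,\mathrm{dom}\,H$ is closed; and there exists $c\ge0$ such that for every $z\in\mathcal{Z}_0$ there are $\varepsilon,\delta>0$ with \[\Gamma(\xi,z')\cap\delta\mathbb{B}\subset\Gamma(\bar\xi,z')+c\|\xi-\bar\xi\|\mathbb{B}\quad\text{whenever }(\xi,z')\in(\mathcal{D}\times\mathrm{bd}\,\mathbb{B})\cap((\bar\xi,z)+\varepsilon\mathbb{B}).\]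
   Context: $\mathbb{B}$ is the closed unit ball and $\mathrm{bd}$ the boundary. A set-valued map $H$ is positively homogeneous if $H(\gamma z)=\gamma H(z)$ for all $\gamma>0$. $\Gamma$ is polyhedral if its graph $\{(\xi,z,\eta)\mid\eta\in\Gamma(\xi,z)\}$ is a finite union of convex polyhedra. $\Gamma$ is outer semicontinuous if $\limsup_{(\xi',z')\to(\xi,z)}\Gamma(\xi',z')\subset\Gamma(\xi,z)$ (Painlevé–Kuratowski) for all $(\xi,z)\in\mathcal{D}\times\mathbb{R}^m$. *)

From HB Require Import structures.
From mathcomp Require Import all_boot all_order all_algebra.
From mathcomp Require Import all_classical all_reals all_analysis.
Set Implicit Arguments. Unset Strict Implicit. Unset Printing Implicit Defensive.
Import Order.TTheory GRing.Theory Num.Theory.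
Import numFieldNormedType.Exports.
Local Open Scope classical_set_scope.
Local Open Scope ring_scope.

(* Vectors of R^k are column vectors 'cV[R]_k (their topology is the usual
   product = Euclidean topology from MathComp-Analysis). *)

Definition enorm (R : realType) (k : nat) (v : 'cV[R]_k) : R :=
  Num.sqrt (\sum_(i < k) (v i 0) ^+ 2).

Definition cball (R : realType) (k : nat) (c : 'cV[R]_k) (r : R) : set 'cV[R]_k :=
  [set x | enorm (x - c) <= r].

(* bd B : boundary of the closed Euclidean unit ball = unit sphere. *)
Definition unit_sphere (R : realType) (k : nat) : set 'cV[R]_k :=
  [set x | enorm x = 1].

Definition convex_polyhedron (R : realType) (k : nat) (P : set 'cV[R]_k) : Prop :=
  exists (r : nat) (M : 'M[R]_(r, k)) (b : 'cV[R]_r),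
    P = [set x | forall i : 'I_r, (M *m x) i 0 <= b i 0].

Definition svmap (R : realType) (N m q : nat) :=
  'cV[R]_N -> 'cV[R]_m -> set 'cV[R]_q.

(* The graph {(xi,z,eta) | xi \in D, eta \in Gamma(xi,z)} (encoded in
   R^(N+m+q) by stacking) is a finite union of convex polyhedra. *)
Definition polyhedral_map (R : realType) (N m q : nat)
    (D : set 'cV[R]_N) (G : svmap R N m q) : Prop :=
  exists (k : nat) (P : 'I_k -> set 'cV[R]_(N + m + q)),
    (forall i, convex_polyhedron (P i)) /\
    forall xi z eta,
      (D xi /\ G xi z eta) <-> exists i, P i (col_mx (col_mx xi z) eta).

Definition pos_homogeneous (R : realType) (m q : nat)
    (H : 'cV[R]_m -> set 'cV[R]_q) : Prop :=
  forall (gamma : R) (z : 'cV[R]_m), 0 < gamma ->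
    H (gamma *: z) = (fun eta => gamma *: eta) @` H z.

(* Painlevé–Kuratowski outer limit of Gamma at (xi, z), relative to the
   domain D x R^m:  eta is in it iff there are sequences (xi_k, z_k) in
   D x R^m converging to (xi, z) and eta_k in Gamma(xi_k, z_k), eta_k -> eta. *)
Definition outer_limit (R : realType) (N m q : nat)
    (D : set 'cV[R]_N) (G : svmap R N m q) (xi : 'cV[R]_N) (z : 'cV[R]_m)
    : set 'cV[R]_q :=
  [set eta | exists (xis : nat -> 'cV[R]_N) (zs : nat -> 'cV[R]_m)
                    (etas : nat -> 'cV[R]_q),
      (forall k, D (xis k)) /\ (forall k, G (xis k) (zs k) (etas k)) /\
      (xis @ \oo --> xi) /\ (zs @ \oo --> z) /\ (etas @ \oo --> eta)].

Definition outer_semicontinuous (R : realType) (N m q : nat)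
    (D : set 'cV[R]_N) (G : svmap R N m q) : Prop :=
  forall xi z, D xi -> outer_limit D G xi z `<=` G xi z.

Definition sdom (R : realType) (m q : nat) (H : 'cV[R]_m -> set 'cV[R]_q)
    : set 'cV[R]_m := [set z | exists eta, H z eta].

(* The graph of Gamma is a finite union of polyhedra, hence closed, which is
   outer semicontinuity.  Fourier-Motzkin elimination shows that projections
   and sections of polyhedra are polyhedra; so dom H is a finite union of
   polyhedra, and so is its image under A(xib), which is a projection of a
   graph.  In particular that image is closed.

   The estimate holds with c = 0: near (xib, z, 0) the graph does not depend
   on xi.  Near each of its points x, a finite union of polyhedra S coincides
   with x + T(x), where T(x) is its (closed, conic) tangent cone.  Along the
   ray g |-> (xib, g z, 0) the constraint values are affine in g, so their
   signs are constant for g >= G and T(xib, g z, 0) is contained in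
   T(xib, G z, 0) =: T.  With the homogeneity of S in (z, eta) this makes T
   stable under shrinking the xi-component, and by closedness that component
   can be dropped.  So if (xi, z', eta) in S is close to (xib, z, 0), scaling
   it by G, reading it in T, replacing xi by xib and scaling back gives
   (xib, z', eta) in S. *)

From HB Require Import structures.
From mathcomp Require Import all_boot all_order all_algebra.
From mathcomp Require Import all_classical all_reals all_analysis.
From mathcomp Require Import ring lra.
Import Order.TTheory GRing.Theory Num.Theory.
Import numFieldNormedType.Exports.
Local Open Scope classical_set_scope.
Local Open Scope ring_scope.
Set Implicit Arguments. Unset Strict Implicit. Unset Printing Implicit Defensive.

Section EuclideanNorm.
Variable R : realType.

Definition sqnorm k (v : 'cV[R]_k) : R := \sum_(i < k) v i 0 ^+ 2.

Lemma sqnorm_ge0 k (v : 'cV[R]_k) : 0 <= sqnorm v.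
Proof. by apply: sumr_ge0 => i _; rewrite sqr_ge0. Qed.

Lemma sqnormZ k a (v : 'cV[R]_k) : sqnorm (a *: v) = a ^+ 2 * sqnorm v.
Proof. by rewrite /sqnorm mulr_sumr; apply: eq_bigr => i _; rewrite mxE exprMn. Qed.

Lemma sqnorm_col_mx a b (u : 'cV[R]_a) (v : 'cV[R]_b) :
  sqnorm (col_mx u v) = sqnorm u + sqnorm v.
Proof.
rewrite /sqnorm big_split_ord; congr (_ + _); apply: eq_bigr => i _.
  by rewrite col_mxEu.
by rewrite col_mxEd.
Qed.

Lemma enorm_ge0 k (v : 'cV[R]_k) : 0 <= enorm v.
Proof. exact: sqrtr_ge0. Qed.

Lemma enorm0 k : enorm (0 : 'cV[R]_k) = 0.
Proof. by rewrite /enorm big1 ?sqrtr0 // => i _; rewrite mxE expr0n. Qed.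

Lemma enormZ k a (v : 'cV[R]_k) : enorm (a *: v) = `|a| * enorm v.
Proof. by rewrite /enorm -/(sqnorm _) sqnormZ sqrtrM ?sqr_ge0 // sqrtr_sqr. Qed.

Lemma enorm_le_enormZ k a (v : 'cV[R]_k) : 1 <= `|a| -> enorm v <= enorm (a *: v).
Proof. by move=> a1; rewrite enormZ ler_peMl ?enorm_ge0. Qed.

Lemma enorm_coord k (v : 'cV[R]_k) i : `|v i 0| <= enorm v.
Proof.
rewrite -sqrtr_sqr ler_wsqrtr // (bigD1 i) //= lerDl.
by apply: sumr_ge0 => j _; rewrite sqr_ge0.
Qed.

Lemma enorm_col_mx_le a b (u u' : 'cV[R]_a) (v v' : 'cV[R]_b) :
  enorm u <= enorm u' -> enorm v <= enorm v' ->
  enorm (col_mx u v) <= enorm (col_mx u' v').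
Proof.
rewrite /enorm -!/(sqnorm _) !ler_sqrt ?sqnorm_ge0 // !sqnorm_col_mx.
exact: lerD.
Qed.

Lemma enorm_col_mx_leD a b (u : 'cV[R]_a) (v : 'cV[R]_b) :
  enorm (col_mx u v) <= enorm u + enorm v.
Proof.
have uv_ge0 : 0 <= enorm u + enorm v by rewrite addr_ge0 ?enorm_ge0.
rewrite -(ger0_norm uv_ge0) -sqrtr_sqr /enorm -!/(sqnorm _) ler_sqrt ?sqr_ge0 //.
rewrite sqnorm_col_mx sqrrD !sqr_sqrtr ?sqnorm_ge0 // -addrA lerD2l lerDr.
by rewrite mulrn_wge0 // mulr_ge0 // sqrtr_ge0.
Qed.

End EuclideanNorm.

Lemma cvg_col_mx (R : realType) {T} (F : set_system T) {FF : Filter F} a b c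
    (u : T -> 'M[R]_(a, c)) (v : T -> 'M[R]_(b, c)) (x : 'M[R]_(a, c))
    (y : 'M[R]_(b, c)) :
  u @ F --> x -> v @ F --> y -> (fun t => col_mx (u t) (v t)) @ F --> col_mx x y.
Proof.
move=> /(cvg_mx_entourageP _) ux /(cvg_mx_entourageP _) vy.
apply/(cvg_mx_entourageP _) => A entA.
apply: (@filterS2 _ F FF _ _ _ _ (ux A entA) (vy A entA)) => t hu hv i j.
by rewrite !mxE; case: splitP => k _; [exact: hu | exact: hv].
Qed.

Lemma seq_bounded (R : realType) (T : eqType) (s : seq T) (f : T -> R) :
  exists2 M, 1 <= M & {in s, forall x, f x < M}.
Proof.
exists (1 + \sum_(x <- s) `|f x|); first by rewrite lerDl sumr_ge0.
move=> x xs; rewrite (big_rem x xs) /=.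
have := ler_norm (f x); have : 0 <= \sum_(y <- rem x s) `|f y| by rewrite sumr_ge0.
lra.
Qed.

Lemma exists_small_factor (R : realType) (r t x : R) : 0 < r -> 0 < t -> 0 <= x ->
  exists2 s, 0 < s & t * s * x <= r.
Proof.
move=> r0 t0 x0; have x1 : 0 < x + 1 by rewrite ltr_pwDr.
exists (r / (t * (x + 1))); first by rewrite divr_gt0 // mulr_gt0.
have -> : t * (r / (t * (x + 1))) = r / (x + 1) by field; rewrite !gt_eqF.
by rewrite mulrAC ler_pdivrMr // ler_wpM2l ?ltW //; lra.
Qed.

Section LinearInequalities.
Variables (R : realType) (K : nat).

Definition ineq := ('rV[R]_K * R)%type.

Definition lhs (c : ineq) (x : 'cV[R]_K) : R := (c.1 *m x) 0 0.

Definition sat (s : seq ineq) (x : 'cV[R]_K) : bool := all (fun c => lhs c x <= c.2) s.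

Definition polyunion (S : seq (seq ineq)) : set 'cV[R]_K :=
  \bigcup_(s in [set` S]) [set x | sat s x].

Lemma lhsD c x y : lhs c (x + y) = lhs c x + lhs c y.
Proof. by rewrite /lhs mulmxDr mxE. Qed.

Lemma lhsZ c a x : lhs c (a *: x) = a * lhs c x.
Proof. by rewrite /lhs -scalemxAr mxE. Qed.

Lemma lhs_le_enorm c x : `|lhs c x| <= (\sum_j `|c.1 0 j|) * enorm x.
Proof.
rewrite /lhs mxE mulr_suml; apply: le_trans (ler_norm_sum _ _ _) _.
by apply: ler_sum => j _; rewrite normrM ler_wpM2l // enorm_coord.
Qed.

Lemma lhs_continuous c : continuous (lhs c).
Proof.
have -> : lhs c = fun x => \sum_j c.1 0 j * x j 0.
  by apply/funext => x; rewrite /lhs mxE.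
apply: continuous_big => [|j _ x]; first exact: add_continuous.
exact: continuous_comp (@coord_continuous R K 1 j 0 x)
  (@mulrl_continuous R (c.1 0 j) (x j 0)).
Qed.

Lemma closed_sat s : closed [set x | sat s x].
Proof.
have -> : [set x | sat s x] = \bigcap_(c in [set` s]) [set x | lhs c x <= c.2].
  by apply/seteqP; split => x /=; [move/allP | move=> h; apply/allP].
apply: closed_bigI => c _.
apply: (@preimage_closed _ _ (lhs c) [set y | y <= c.2]); last exact: closed_le.
by move=> x _; exact: lhs_continuous.
Qed.

Lemma closed_polyunion S : closed (polyunion S).
Proof.
by rewrite /polyunion bigcup_seq; apply: closed_bigsetU => s _; exact: closed_sat.
Qed.

End LinearInequalities.

Section FourierMotzkin.
Variables (R : realType) (K : nat).
Implicit Types (p q : ineq R K) (s : seq (ineq R K)) (d x : 'cV[R]_K).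

Definition fm_comb d p q : ineq R K :=
  ((- lhs q d) *: p.1 + lhs p d *: q.1, (- lhs q d) * p.2 + lhs p d * q.2).

Lemma lhs_fm_comb d p q x :
  lhs (fm_comb d p q) x = - lhs q d * lhs p x + lhs p d * lhs q x.
Proof. by rewrite /fm_comb /lhs /= mulmxDl -!scalemxAl !mxE. Qed.

Definition fm_elim d s : seq (ineq R K) :=
  [seq c <- s | lhs c d == 0] ++
  [seq fm_comb d p q | p <- [seq c <- s | 0 < lhs c d],
                       q <- [seq c <- s | lhs c d < 0]].

Lemma exists_between (L U : seq R) : {in L & U, forall l u, l <= u} ->
  exists t, {in L, forall l, l <= t} /\ {in U, forall u, t <= u}.
Proof.
elim: L => [|l L IH] LU.
  exists (- \sum_(u <- U) `|u|); split => // u uU.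
  rewrite lerNl (big_rem u uU) /=; have := ler_norm (- u).
  rewrite normrN; have : 0 <= \sum_(v <- rem u U) `|v| by rewrite sumr_ge0.
  lra.
have [l' u l'L uU|t [Lt tU]] := IH; first by apply: LU; rewrite ?inE ?l'L ?orbT.
exists (Num.max l t); split => [l'|u uU].
  by rewrite inE => /orP[/eqP->|l'L]; rewrite le_max ?lexx // Lt ?orbT.
by rewrite ge_max tU // andbT LU ?mem_head.
Qed.

Lemma fm_elimP d s x : sat (fm_elim d s) x <-> exists t, sat s (x + t *: d).
Proof.
split=> [/allP sx|[t /allP st]]; last first.
  apply/allP => c; rewrite mem_cat => /orP[|/allpairsP [[p q] /= []]].
    by rewrite mem_filter => /andP[/eqP cd0 /st]; rewrite lhsD lhsZ cd0 mulr0 addr0.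
  rewrite !mem_filter => /andP[pd /st hp] /andP[qd /st hq] ->.
  move: hp hq; rewrite /= !lhsD !lhsZ lhs_fm_comb => hp hq.
  have qd' : 0 <= - lhs q d by rewrite oppr_ge0 ltW.
  have := ler_wpM2l (ltW pd) hq; have := ler_wpM2l qd' hp.
  nra.
pose bnd c := (c.2 - lhs c x) / lhs c d.
have [l u|t [Lt tU]] := exists_between (L := [seq bnd c | c <- s & lhs c d < 0])
                                       (U := [seq bnd c | c <- s & 0 < lhs c d]).
  move=> /mapP[q + ->] /mapP[p + ->]; rewrite !mem_filter => /andP[qd qs] /andP[pd ps].
  have : lhs (fm_comb d p q) x <= (fm_comb d p q).2.
    apply: sx; rewrite mem_cat; apply/orP; right; apply/allpairsP.
    by exists (p, q); rewrite !mem_filter pd ps qd qs.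
  rewrite lhs_fm_comb /= /bnd ler_pdivlMr // mulrAC ler_ndivrMr //.
  nra.
exists t; apply/allP => c cs; rewrite lhsD lhsZ.
case: (ltgtP (lhs c d) 0) => cd.
- have := Lt (bnd c); rewrite /bnd ler_ndivrMr // => /(_ (map_f _ _)).
  by rewrite mem_filter cd cs mulrC => /(_ isT); rewrite lerBrDl.
- have := tU (bnd c); rewrite /bnd ler_pdivlMr // => /(_ (map_f _ _)).
  by rewrite mem_filter cd cs mulrC => /(_ isT); rewrite lerBrDl.
- by rewrite cd mulr0 addr0; apply: sx; rewrite mem_cat mem_filter cd eqxx cs.
Qed.

End FourierMotzkin.

Section Projection.
Variables (R : realType) (a b : nat).
Implicit Types s : seq (ineq R (a + b)).

Lemma lhs_col_mx (c : ineq R (a + b)) x y :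
  lhs c (col_mx x y) = (lsubmx c.1 *m x) 0 0 + (rsubmx c.1 *m y) 0 0.
Proof. by rewrite /lhs -{1}(hsubmxK c.1) mul_row_col mxE. Qed.

Definition coord_dir (k : 'I_b) : 'cV[R]_(a + b) := col_mx 0 (delta_mx k 0).

Lemma foldr_fm_elimP (l : seq 'I_b) s x :
  sat (foldr (fun k => fm_elim (coord_dir k)) s l) x <->
  exists y : 'cV[R]_b, (forall k, k \notin l -> y k 0 = 0) /\ sat s (x + col_mx 0 y).
Proof.
elim: l x => [|k l IH] x /=.
  split=> [sx|[y [y0]]].
    by exists 0; rewrite col_mx0 addr0; split=> // k; rewrite mxE.
  have -> : y = 0 by apply/matrixP => i j; rewrite ord1 y0 ?mxE.
  by rewrite col_mx0 addr0.
rewrite fm_elimP; split=> [[t /IH [y [y0 sy]]]|[y [y0 sy]]].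
  exists (t *: delta_mx k 0 + y); split.
    move=> k'; rewrite inE negb_or => /andP[k'k k'l].
    by rewrite !mxE y0 // (negbTE k'k) mulr0 add0r.
  by move: sy; rewrite /coord_dir -addrA scale_col_mx scaler0 add_col_mx addr0.
exists (y k 0); apply/IH; exists (y - y k 0 *: delta_mx k 0); split.
  move=> k' k'l; rewrite !mxE; have [->|k'k] := eqVneq k' k.
    by rewrite eqxx mulr1 subrr.
  by rewrite andFb mulr0 subr0 y0 // inE negb_or k'k.
rewrite /coord_dir -addrA scale_col_mx scaler0 add_col_mx addr0.
by rewrite [_ + (y - _)]addrC subrK.
Qed.

Definition proj_sys s : seq (ineq R a) :=
  [seq (lsubmx c.1, c.2) | c <- foldr (fun k => fm_elim (coord_dir k)) s (enum 'I_b)].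

Lemma proj_sysP s t : sat (proj_sys s) t <-> exists y, sat s (col_mx t y).
Proof.
have -> : sat (proj_sys s) t =
    sat (foldr (fun k => fm_elim (coord_dir k)) s (enum 'I_b)) (col_mx t 0).
  rewrite /sat all_map; apply: eq_all => c.
  by rewrite /= lhs_col_mx mulmx0 /lhs !mxE addr0.
rewrite foldr_fm_elimP; split=> [[y [_ sy]]|[y sy]]; exists y.
  by move: sy; rewrite add_col_mx addr0 add0r.
by split=> [k|]; rewrite ?mem_enum // add_col_mx addr0 add0r.
Qed.

Definition section_sys (x : 'cV[R]_a) s : seq (ineq R b) :=
  [seq (rsubmx c.1, c.2 - (lsubmx c.1 *m x) 0 0) | c <- s].

Lemma section_sysE x s y : sat (section_sys x s) y = sat s (col_mx x y).
Proof.
by rewrite /sat all_map; apply: eq_all => c; rewrite /= lhs_col_mx lerBrDl addrC.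
Qed.

End Projection.

Section LinearImage.
Variables (R : realType) (k q : nat) (L : 'M[R]_(q, k)).

Definition graph_sys (s : seq (ineq R k)) : seq (ineq R (q + k)) :=
  [seq (row_mx 0 c.1, c.2) | c <- s] ++
  [seq (row_mx (delta_mx 0 j) (- row j L), 0) | j <- enum 'I_q] ++
  [seq (row_mx (- delta_mx 0 j) (row j L), 0) | j <- enum 'I_q].

Lemma graph_sysE s t y : sat (graph_sys s) (col_mx t y) = sat s y && (t == L *m y).
Proof.
rewrite /sat !all_cat !all_map; congr (_ && _).
  by apply: eq_all => c; rewrite /lhs /= mul_row_col mul0mx add0r.
have lhs_ub j : lhs (row_mx (delta_mx 0 j) (- row j L), 0) (col_mx t y) =
    t j 0 - (L *m y) j 0.
  by rewrite /lhs /= mul_row_col -rowE mulNmx -row_mul !mxE.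
have lhs_lb j : lhs (row_mx (- delta_mx 0 j) (row j L), 0) (col_mx t y) =
    (L *m y) j 0 - t j 0.
  by rewrite /lhs /= mul_row_col mulNmx -rowE -row_mul !mxE addrC.
apply/idP/eqP => [/andP[/allP ub /allP lb]|tL].
  apply/matrixP => j i; rewrite ord1; apply/eqP; rewrite eq_le.
  have := ub j; have := lb j; rewrite -enumT mem_enum /= lhs_ub lhs_lb !subr_le0.
  by move=> /(_ isT) -> /(_ isT) ->.
by apply/andP; split; apply/allP => j _; rewrite /= ?lhs_ub ?lhs_lb tL subrr.
Qed.

Lemma closed_image_sat s : closed [set L *m y | y in [set y | sat s y]].
Proof.
have -> : [set L *m y | y in [set y | sat s y]] =
    [set t | sat (proj_sys (graph_sys s)) t].
  apply/seteqP; split=> t.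
    by case=> y sy <-; apply/proj_sysP; exists y; rewrite graph_sysE sy eqxx.
  by move/proj_sysP => [y]; rewrite graph_sysE => /andP[sy /eqP->]; exists y.
exact: closed_sat.
Qed.

Lemma closed_image_polyunion S : closed [set L *m y | y in polyunion S].
Proof.
rewrite /polyunion image_bigcup bigcup_seq; apply: closed_bigsetU => s _.
exact: closed_image_sat.
Qed.

End LinearImage.

Local Notation trip x z e := (col_mx (col_mx x z) e).

Lemma dom_fiber_polyunion (R : realType) N m q (S : seq (seq (ineq R (N + m + q))))
    (x : 'cV[R]_N) :
  [set z | exists e, polyunion S (trip x z e)] =
  polyunion [seq section_sys x (proj_sys s) | s <- S].
Proof.
apply/seteqP; split=> z /=.
  move=> [e [s sS se]]; exists (section_sys x (proj_sys s)); first exact: map_f.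
  by rewrite /= section_sysE; apply/proj_sysP; exists e.
by move=> [_ /mapP[s sS ->]]; rewrite /= section_sysE => /proj_sysP[e se]; exists e, s.
Qed.

Lemma sign_add_small (R : realType) (a b : R) : (a != 0 -> `|b| < `|a|) ->
  (a + b <= 0) = (a <= 0) && ((a == 0) ==> (b <= 0)).
Proof.
move=> small; have [->|a0] := eqVneq a 0; first by rewrite add0r lexx.
have := small a0; rewrite implyFb andbT.
have := ler_norm b; have := ler_norm (- b); rewrite normrN.
move: a0; rewrite neq_lt => /orP[ha|ha].
  by rewrite (ltr0_norm ha) (ltW ha) => *; apply/idP; lra.
rewrite (gtr0_norm ha) => *; rewrite [a <= 0]leNgt ha.
by apply/negbTE; rewrite -ltNge; lra.
Qed.

Section TangentCone.
Variables (R : realType) (K : nat) (S : seq (seq (ineq R K))).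
Implicit Types (s : seq (ineq R K)) (x v : 'cV[R]_K).

Definition inward s x v : bool := all (fun c => (lhs c x == c.2) ==> (lhs c v <= 0)) s.

Definition active_sys x s : seq (ineq R K) := [seq (c.1, 0) | c <- s & lhs c x == c.2].

Lemma active_sysE x s v : sat (active_sys x s) v = inward s x v.
Proof. by rewrite /sat all_map all_filter. Qed.

Definition tcone x : set 'cV[R]_K := polyunion [seq active_sys x s | s <- S & sat s x].

Lemma tconeP x v : tcone x v <-> exists2 s, s \in S & sat s x && inward s x v.
Proof.
split=> [[s' /mapP[s + ->]]|[s sS /andP[sx sv]]].
  by rewrite mem_filter /= active_sysE => /andP[sx sS] sv; exists s; rewrite // sx.
exists (active_sys x s); first by apply: map_f; rewrite mem_filter sx.
by rewrite /= active_sysE.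
Qed.

Lemma tconeZ x v a : 0 < a -> tcone x v -> tcone x (a *: v).
Proof.
move=> a0 /tconeP[s sS /andP[sx /allP sv]]; apply/tconeP; exists s; rewrite // sx.
apply/allP => c /sv /implyP cv; apply/implyP => /cv.
by rewrite lhsZ pmulr_rle0.
Qed.

Lemma sat_local s x v :
    {in s, forall c, lhs c x != c.2 -> `|lhs c v| < `|lhs c x - c.2|} ->
  sat s (x + v) = sat s x && inward s x v.
Proof.
move=> small; rewrite /sat -all_predI; apply: eq_in_all => c cs /=.
rewrite lhsD -subr_le0 addrAC sign_add_small ?subr_le0 ?subr_eq0 //.
exact: small.
Qed.

Lemma local_radius s x : exists2 rho : R, 0 < rho & forall v, enorm v <= rho ->
  {in s, forall c, lhs c x != c.2 -> `|lhs c v| < `|lhs c x - c.2|}.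
Proof.
have [M M1 bndM] := seq_bounded s (fun c => (\sum_j `|c.1 0 j|) / `|lhs c x - c.2|).
have M0 : 0 < M by apply: lt_le_trans M1.
exists M^-1 => [|v hv c cs cx]; first by rewrite invr_gt0.
have gap : 0 < `|lhs c x - c.2| by rewrite normr_gt0 subr_eq0.
have C0 : 0 <= \sum_j `|c.1 0 j| by rewrite sumr_ge0.
apply: le_lt_trans (lhs_le_enorm c v) _; apply: le_lt_trans (ler_wpM2l C0 hv) _.
by rewrite ltr_pdivrMr // mulrC -ltr_pdivrMr // bndM.
Qed.

Lemma polyunion_local x : exists2 rho : R, 0 < rho &
  forall v, enorm v <= rho -> polyunion S (x + v) <-> tcone x v.
Proof.
have [rho rho0 small] := local_radius (flatten S) x.
exists rho => // v hv; rewrite tconeP.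
have loc s : s \in S -> sat s (x + v) = sat s x && inward s x v.
  by move=> sS; apply: sat_local => c cs; apply: small => //; apply/flattenP; exists s.
by split=> -[s sS]; [rewrite /= loc // | rewrite -loc //]; exists s.
Qed.

End TangentCone.

Lemma affine_sign_stable (R : realType) (al be G g : R) :
  (al != 0 -> `|be| < G * `|al|) -> G <= g ->
  ((be + g * al <= 0) = (be + G * al <= 0)) /\
  ((be + g * al == 0) = (be + G * al == 0)).
Proof.
move=> small Gg; have [->|al0] := eqVneq al 0; first by rewrite !mulr0.
have := small al0; have := ler_norm be; have := ler_norm (- be); rewrite normrN.
move: al0; rewrite neq_lt => /orP[al0|al0].
  rewrite (ltr0_norm al0) => *; have := ler_wnM2r (ltW al0) Gg => *.
  have [l1 l2] : be + g * al < 0 /\ be + G * al < 0 by split; lra.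
  by rewrite (ltW l1) (ltW l2) (lt_eqF l1) (lt_eqF l2).
rewrite (gtr0_norm al0) => *; have := ler_wpM2r (ltW al0) Gg => *.
have [l1 l2] : 0 < be + g * al /\ 0 < be + G * al by split; lra.
by rewrite !leNgt l1 l2 (gt_eqF l1) (gt_eqF l2).
Qed.

Section FiberStability.
Variables (R : realType) (N m q : nat) (S : seq (seq (ineq R (N + m + q)))).
Hypothesis homogS : forall (g : R) xi z e, 0 < g ->
  polyunion S (trip xi z e) -> polyunion S (trip xi (g *: z) (g *: e)).
Variables (xb : 'cV[R]_N) (z : 'cV[R]_m).

Local Notation ray g := (trip xb (g *: z) 0).
Local Notation ray0 := (trip xb (0 : 'cV[R]_m) (0 : 'cV[R]_q)).
Local Notation ray_dir := (trip (0 : 'cV[R]_N) z (0 : 'cV[R]_q)).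

Lemma lhs_ray (c : ineq R (N + m + q)) g :
  lhs c (ray g) - c.2 = (lhs c ray0 - c.2) + g * lhs c ray_dir.
Proof.
have -> : ray g = ray0 + g *: ray_dir.
  by rewrite !scale_col_mx !scaler0 !add_col_mx !addr0 add0r.
by rewrite lhsD lhsZ addrAC.
Qed.

Lemma exists_stable_ray : exists2 G : R, 1 <= G &
  forall g v, G <= g -> tcone S (ray g) v -> tcone S (ray G) v.
Proof.
pose be c := lhs c ray0 - c.2; pose al c := lhs c ray_dir.
have [G G1 bndG] := seq_bounded (flatten S) (fun c => `|be c| / `|al c|).
exists G => // g v Gg /tconeP[s sS /andP[/allP sg /allP vg]].
have stable c : c \in s ->
    ((lhs c (ray g) <= c.2) = (lhs c (ray G) <= c.2)) /\
    ((lhs c (ray g) == c.2) = (lhs c (ray G) == c.2)).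
  move=> cs; rewrite -![lhs c _ <= _]subr_le0 -![lhs c _ == _]subr_eq0 !lhs_ray.
  apply: affine_sign_stable Gg => al0; rewrite -ltr_pdivrMr ?normr_gt0 //.
  by apply: bndG; apply/flattenP; exists s.
apply/tconeP; exists s => //; apply/andP; split; apply/allP => c cs.
  by rewrite -(stable c cs).1 sg.
by rewrite -(stable c cs).2 vg.
Qed.

Section StableRay.
Variable G : R.
Hypotheses (G1 : 1 <= G)
  (stableG : forall g v, G <= g -> tcone S (ray g) v -> tcone S (ray G) v).

Lemma tcone_ray_shrink a w e t : 1 <= t ->
  tcone S (ray G) (trip a w e) -> tcone S (ray G) (trip (t^-1 *: a) w e).
Proof.
(* Step from [ray G] into S along [v], rescale by [t] using homogeneity, and
   read the result in the tangent cone at [ray (t * G)], which lies in the one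
   at [ray G]. *)
move=> t1 Tv; have t0 : 0 < t by apply: lt_le_trans t1.
have [r1 r10 loc1] := polyunion_local S (ray G).
have [r2 r20 loc2] := polyunion_local S (ray (t * G)).
set v := trip a w e; set r := Num.min r1 r2.
have r0 : 0 < r by rewrite lt_min r10 r20.
have [s s0 tsv] := exists_small_factor r0 t0 (enorm_ge0 v).
have S1 : polyunion S (ray G + s *: v).
  apply/loc1; last exact: tconeZ.
  rewrite enormZ gtr0_norm //.
  apply: le_trans (le_trans tsv _); last by rewrite ge_min lexx.
  by rewrite -mulrA ler_peMl // mulr_ge0 ?enorm_ge0 // ltW.
pose v' := trip (s *: a) ((t * s) *: w) ((t * s) *: e).
have S2 : polyunion S (ray (t * G) + v').
  have -> : ray (t * G) + v' =
      trip (xb + s *: a) (t *: (G *: z + s *: w)) (t *: (s *: e)).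
    by rewrite !add_col_mx add0r scalerDr !scalerA.
  by apply: homogS => //; move: S1; rewrite /v !scale_col_mx !add_col_mx add0r.
have v'_small : enorm v' <= t * s * enorm v.
  rewrite -[t * s]gtr0_norm; last exact: mulr_gt0.
  rewrite -enormZ /v !scale_col_mx.
  apply: enorm_col_mx_le => //; apply: enorm_col_mx_le => //.
  by rewrite -scalerA; apply: enorm_le_enormZ; rewrite gtr0_norm.
have T2 : tcone S (ray G) v'.
  apply: (stableG (g := t * G)).
    by rewrite ler_peMl // ltW // (lt_le_trans ltr01 G1).
  apply/loc2 => //; apply: le_trans v'_small (le_trans tsv _).
  by rewrite ge_min lexx orbT.
have := tconeZ (a := (t * s)^-1) _ T2; rewrite invr_gt0 mulr_gt0 // => /(_ isT).
have ts0 : t * s != 0 by rewrite mulf_neq0 // lt0r_neq0.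
rewrite /v' !scale_col_mx !scalerA mulVf // !scale1r.
by rewrite invfM -mulrA mulVf ?mulr1 // lt0r_neq0.
Qed.

Lemma tcone_ray_drop a w e :
  tcone S (ray G) (trip a w e) -> tcone S (ray G) (trip 0 w e).
Proof.
move=> Tv; have Tn n : tcone S (ray G) (trip (harmonic n *: a) w e).
  by apply: tcone_ray_shrink; rewrite // ler1n.
have closedT : closed (tcone S (ray G)) by exact: closed_polyunion.
apply: (closed_cvg _ closedT (@nearW _ \oo _ _ Tn)).
apply: cvg_col_mx; last exact: cvg_cst.
apply: cvg_col_mx; last exact: cvg_cst.
by rewrite -(scale0r a); apply: cvgZ; [exact: cvg_harmonic | exact: cvg_cst].
Qed.

End StableRay.

Lemma polyunion_fiber_stable : exists2 rho : R, 0 < rho & forall xi z' e,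
  enorm (trip (xi - xb) (z' - z) e) <= rho ->
  polyunion S (trip xi z' e) -> polyunion S (trip xb z' e).
Proof.
have [G G1 stableG] := exists_stable_ray; have G0 : 0 < G by apply: lt_le_trans G1.
have [r r0 loc] := polyunion_local S (ray G).
exists (r / G) => [|xi z' e small Sxi]; first by rewrite divr_gt0.
pose v := trip (xi - xb) (G *: (z' - z)) (G *: e).
have v_small : enorm v <= r.
  apply: (@le_trans _ _ (enorm (G *: trip (xi - xb) (z' - z) e))).
    rewrite !scale_col_mx; apply: enorm_col_mx_le => //; apply: enorm_col_mx_le => //.
    by apply: enorm_le_enormZ; rewrite gtr0_norm.
  by rewrite enormZ gtr0_norm // mulrC -ler_pdivlMr.
have Tv : tcone S (ray G) v.
  apply/loc => //; rewrite /v !add_col_mx addrC subrK add0r -scalerDr addrC subrK.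
  exact: homogS.
have v0_small : enorm (trip (0 : 'cV_N) (G *: (z' - z)) (G *: e)) <= r.
  apply: le_trans v_small; apply: enorm_col_mx_le => //; apply: enorm_col_mx_le => //.
  by rewrite enorm0 enorm_ge0.
have := (loc _ v0_small).2 (tcone_ray_drop G1 stableG Tv).
rewrite !add_col_mx addr0 -scalerDr addrC subrK add0r.
move/(homogS (g := G^-1)); rewrite invr_gt0 => /(_ G0).
by rewrite !scalerA mulVf ?lt0r_neq0 // !scale1r.
Qed.

End FiberStability.

Lemma convex_polyhedron_sat (R : realType) k (P : set 'cV[R]_k) :
  convex_polyhedron P -> exists s : seq (ineq R k), P = [set x | sat s x].
Proof.
have row_lhs r (M : 'M[R]_(r, k)) j x : (row j M *m x) 0 0 = (M *m x) j 0.
  by rewrite -row_mul mxE.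
move=> [r [M [b ->]]]; exists [seq (row j M, b j 0) | j <- enum 'I_r].
apply/seteqP; split=> x /=.
  by move=> Mx; rewrite /sat all_map; apply/allP => j _; rewrite /= /lhs row_lhs.
move/allP => Mx j; rewrite -row_lhs; apply: (Mx (row j M, b j 0)).
by apply: map_f; rewrite mem_enum.
Qed.

Section PolyhedralMap.
Variables (R : realType) (N m q : nat) (D : set 'cV[R]_N) (G : svmap R N m q).

Lemma polyhedral_map_polyunion : polyhedral_map D G ->
  exists S : seq (seq (ineq R (N + m + q))),
    forall xi z e, D xi /\ G xi z e <-> polyunion S (trip xi z e).
Proof.
move=> [k [P [convP graphP]]].
have /choice[s Ps] : forall i, exists s, P i = [set x | sat s x].
  by move=> i; exact: convex_polyhedron_sat.
exists [seq s i | i <- enum 'I_k] => xi z e; rewrite graphP.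
split=> [[i]|[_ /mapP[i _ ->] sx]]; last by exists i; rewrite Ps.
by rewrite Ps => sx; exists (s i) => //; apply: map_f; rewrite mem_enum.
Qed.

Lemma polyunion_graph_osc (S : seq (seq (ineq R (N + m + q)))) :
  (forall xi z e, D xi /\ G xi z e <-> polyunion S (trip xi z e)) ->
  outer_semicontinuous D G.
Proof.
move=> graphS xi z Dxi e [xis [zs [es [Dn [Gn [cxi [cz ce]]]]]]].
have Sn n : polyunion S (trip (xis n) (zs n) (es n)) by apply/graphS.
have : polyunion S (trip xi z e).
  have closedS : closed (polyunion S) by exact: closed_polyunion.
  apply: (closed_cvg _ closedS (@nearW _ \oo _ _ Sn)).
  by apply: cvg_col_mx => //; exact: cvg_col_mx.
by case/graphS.
Qed.

End PolyhedralMap.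

Theorem proposition1 (R : realType) (n p m q : nat)
    (U D : set 'cV[R]_(n + p)) (G : svmap R (n + p) m q)
    (A : 'cV[R]_(n + p) -> 'M[R]_(q, m)) :
  open U -> D `<=` U -> D !=set0 ->
  (forall xi, D xi -> pos_homogeneous (G xi)) ->
  polyhedral_map D G ->
  outer_semicontinuous D G /\
  forall xib, D xib ->
    let H := G xib in
    let Z := @unit_sphere R m `&` sdom H in
    let Z0 := [set z | Z z /\ exists eta, H z eta /\ A xib *m z + eta = 0] in
    closed [set A xib *m z | z in sdom H] /\
    exists c : R, 0 <= c /\
      forall z, Z0 z ->
        exists eps delta : R, 0 < eps /\ 0 < delta /\
          forall xi z', D xi -> @unit_sphere R m z' ->
            enorm (col_mx (xi - xib) (z' - z)) <= eps ->
            G xi z' `&` cball 0 delta `<=`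
              [set eta | exists2 eta', H z' eta' &
                           enorm (eta - eta') <= c * enorm (xi - xib)].
Proof.
move=> _ _ _ homG /polyhedral_map_polyunion[S graphS].
have homS (g : R) xi z e : 0 < g ->
    polyunion S (trip xi z e) -> polyunion S (trip xi (g *: z) (g *: e)).
  move=> g0 /graphS[Dxi Ge]; apply/graphS; split => //.
  by rewrite (homG xi Dxi g z g0); exists e.
split=> [|xib Dxib H Z Z0]; first exact: polyunion_graph_osc graphS.
split.
  have -> : sdom H = [set z | exists e, polyunion S (trip xib z e)].
    by apply/seteqP; split=> z [e He]; exists e; [apply/graphS | case/graphS: He].
  rewrite dom_fiber_polyunion; exact: closed_image_polyunion.
exists 0; split=> // z _.
have [rho rho0 stable] := polyunion_fiber_stable homS xib z.
exists (rho / 2), (rho / 2); do !split; rewrite ?divr_gt0 //.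
move=> xi z' Dxi _ near_z e [Ge e_small]; exists e; last by rewrite subrr enorm0 mul0r.
have : polyunion S (trip xib z' e).
  apply: (stable xi); last exact/graphS.
  apply: le_trans (enorm_col_mx_leD _ _) _.
  by rewrite [rho]splitr lerD //; move: e_small; rewrite /cball /= subr0.
by case/graphS.
Qed.
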